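(* Fix $\lambda>0$, $L\ge2$, an index $l\in\{1,\dots,L\}$, $\alpha_i\in\mathbb{C}$, $r_i>0$, a unit vector ${\bm\kappa}_i=(\Phi_i,\Psi_i,\Theta_i)^T\in\mathbb{R}^3$, and for each $l'\neq l$ a complex number $V_{k,l,l'}$ and a real number $r_{i,l'}$. For ${\bf q}=(x,y,z)^T\in\mathbb{R}^3$ define $$r_{i,l}({\bf q})=r_i+x\Phi_i+y\Psi_i+z\Theta_i+\frac{x^2+y^2+z^2-(x\Phi_i+y\Psi_i+z\Theta_i)^2}{2r_i},$$ $$g_{k,i,l}({\bf q})=\sum_{l'\neq l}2|\alpha_i|^2|V_{k,l,l'}|\cos\!\Big(\frac{2\pi}{\lambda}\big(r_{i,l}({\bf q})-r_{i,l'}\big)+\angle V_{k,l,l'}\Big).$$ Let $S\subseteq\mathbb{R}^3$ be a convex set with $C_{\max}:=\sup_{{\bf q}\in S}\|{\bf q}\|^2<\infty$, and let $$\delta_{k,i,l}=\frac{2\pi}{\lambda}\sum_{l'\neq l}2|\alpha_i|^2|V_{k,l,l'}|\sqrt{\frac{2}{r_i^2}+\Big(\frac{2\pi}{\lambda}\Big)^2\Big(1+\frac{C_{\max}}{r_i^2}\Big)^2}.$$ Then for all ${\bf q}_l,{\bf q}_l^{(j)}\in S$, $$g_{k,i,l}({\bf q}_l)\ge g_{k,i,l}({\bf q}_l^{(j)})+\nabla g_{k,i,l}({\bf q}_l^{(j)})^T({\bf q}_l-{\bf q}_l^{(j)})-\frac{\delta_{k,i,l}}{2}\|{\bf q}_l-{\bf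 q}_l^{(j)}\|^2,$$ $$g_{k,i,l}({\bf q}_l)\le g_{k,i,l}({\bf q}_l^{(j)})+\nabla g_{k,i,l}({\bf q}_l^{(j)})^T({\bf q}_l-{\bf q}_l^{(j)})+\frac{\delta_{k,i,l}}{2}\|{\bf q}_l-{\bf q}_l^{(j)}\|^2.$$
   Context: $\angle z$ denotes the argument (phase) of a complex number $z$, and $\nabla g_{k,i,l}$ is the gradient of $g_{k,i,l}$ with respect to ${\bf q}\in\mathbb{R}^3$. In the paper, $r_{i,l}({\bf q})$ is the second-order Taylor approximation of the distance from user $i$ to UAV $l$ located at relative position ${\bf q}$, and $g_{k,i,l}$ is the part of $|{\bf v}_k^H{\bf h}_i|^2$ depending on UAV $l$'s position, with $V_{k,l,l'}=v_{k,l}v_{k,l'}^*$. *)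

From Stdlib Require Import Reals Lra.
From Coquelicot Require Import Coquelicot.
Open Scope R_scope.

Definition R3 := (R * R * R)%type.
Definition px (q : R3) : R := fst (fst q).
Definition py (q : R3) : R := snd (fst q).
Definition pz (q : R3) : R := snd q.
Definition dot3 (p q : R3) : R := px p * px q + py p * py q + pz p * pz q.
Definition sub3 (p q : R3) : R3 := (px p - px q, py p - py q, pz p - pz q).
Definition norm2 (q : R3) : R := dot3 q q.

(* Argument (phase) of a complex number, in (-pi, pi]; arg 0 := 0. *)
Definition Carg (z : C) : R :=
  if Req_EM_T (Cmod z) 0 then 0
  else if Rle_dec 0 (Im z) then acos (Re z / Cmod z)
       else - acos (Re z / Cmod z).

Definition grad3 (f : R3 -> R) (q : R3) : R3 :=
  (Derive (fun t => f (t, py q, pz q)) (px q),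
   Derive (fun t => f (px q, t, pz q)) (py q),
   Derive (fun t => f (px q, py q, t)) (pz q)).

Definition convex3 (S : R3 -> Prop) : Prop :=
  forall p q t, S p -> S q -> 0 <= t <= 1 ->
    S (t * px p + (1 - t) * px q, t * py p + (1 - t) * py q,
       t * pz p + (1 - t) * pz q).

(* second-order Taylor approximation of the user-UAV distance;
   kap = (Phi, Psi, Theta) *)
Definition r_il (ri : R) (kap : R3) (q : R3) : R :=
  ri + dot3 q kap + (norm2 q - (dot3 q kap) ^ 2) / (2 * ri).

(* g_{k,i,l}: UAVs indexed 0..L-1, sum over l' <> l.
   alpha = alpha_i, V l' = V_{k,l,l'}, rl' l' = r_{i,l'}. *)
Definition g_kil (lam : R) (L l : nat) (alpha : C) (ri : R) (kap : R3)
    (V : nat -> C) (rl' : nat -> R) (q : R3) : R :=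
  sum_f_R0 (fun l' => if Nat.eqb l' l then 0 else
     2 * (Cmod alpha) ^ 2 * Cmod (V l') *
     cos (2 * PI / lam * (r_il ri kap q - rl' l') + Carg (V l'))) (L - 1).

Definition delta_kil (lam : R) (L l : nat) (alpha : C) (ri : R)
    (V : nat -> C) (Cmax : R) : R :=
  2 * PI / lam *
  sum_f_R0 (fun l' => if Nat.eqb l' l then 0 else
     2 * (Cmod alpha) ^ 2 * Cmod (V l') *
     sqrt (2 / ri ^ 2 + (2 * PI / lam) ^ 2 * (1 + Cmax / ri ^ 2) ^ 2)) (L - 1).

From Stdlib Require Import Reals Lra.
From Coquelicot Require Import Coquelicot.
Open Scope R_scope.

(* Since r_il is a quadratic polynomial, it is exactly quadratic along the segment
   rho(t) = r_il(q_j + t d), d = q - q_j, with rho'' = (|d|^2 - (d.kap)^2) / r_i in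
   [0, |d|^2 / r_i]. Every summand of g is K cos(c rho(t) + b) with c = 2 pi / lam, whose
   second derivative -K c (c rho'^2 cos + rho'' sin) is at most
   K c sqrt((c rho'^2)^2 + rho''^2) in absolute value. On S the Cauchy-Schwarz inequality
   and |grad r_il(p)|^2 = 1 + (|p|^2 - (p.kap)^2) / r_i^2 give rho'^2 <= (1 + Cmax/r_i^2) |d|^2,
   so the Taylor remainder of each summand is at most its share of delta/2 |d|^2; summing
   over l' gives both inequalities. The gradient of g is obtained by the chain rule, as g
   depends on q only through r_il(q). *)

Lemma derive_continuity_pt (f : R -> R) (df x : R) :
  is_derive f x df -> continuity_pt f x.
Proof.
intro Hf. apply continuity_pt_filterlim.
apply (ex_derive_continuous (K := R_AbsRing) (V := R_NormedModule)).
now exists df.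
Qed.

Lemma taylor_remainder_le (f f1 f2 : R -> R) (M : R) :
  (forall t, is_derive f t (f1 t)) -> (forall t, is_derive f1 t (f2 t)) ->
  (forall t, 0 <= t <= 1 -> f2 t <= M) ->
  f 1 - f 0 - f1 0 <= M / 2.
Proof.
intros Hf Hf1 HM.
(* [p] vanishes at 0 together with [p'] and is concave on [0, 1]. *)
set (p := fun t => f t - f 0 - f1 0 * t - M / 2 * (t * t)).
set (p' := fun t => f1 t - f1 0 - M * t).
assert (Dp : forall t, is_derive p t (p' t)).
{ intro t. change R in t. unfold p, p'. auto_derive.
  - now exists (f1 t).
  - replace (Derive (fun x : R => f x) t) with (f1 t)
      by (symmetry; now apply is_derive_unique).
    lra. }
assert (Dp' : forall t, is_derive p' t (f2 t - M)).
{ intro t. change R in t. unfold p'. auto_derive.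
  - now exists (f2 t).
  - replace (Derive (fun x : R => f1 x) t) with (f2 t)
      by (symmetry; now apply is_derive_unique).
    lra. }
assert (p'_nonpos : forall t, 0 <= t <= 1 -> p' t <= 0).
{ intros t Ht. destruct (Req_dec t 0) as [-> | Ht0].
  - unfold p'. lra.
  - destruct (MVT_gen p' 0 t (fun s => f2 s - M)) as [s [Hs Eq]].
    + intros; apply Dp'.
    + intros; eapply derive_continuity_pt; apply Dp'.
    + rewrite Rmin_left, Rmax_right in Hs by lra.
      assert (p' 0 = 0) by (unfold p'; ring).
      assert (f2 s <= M) by (apply HM; lra).
      nra. }
destruct (MVT_gen p 0 1 p') as [s [Hs Eq]].
- intros; apply Dp.
- intros; eapply derive_continuity_pt; apply Dp.
- rewrite Rmin_left, Rmax_right in Hs by lra.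
  specialize (p'_nonpos s Hs). unfold p in Eq. lra.
Qed.

Lemma taylor_remainder_abs_le (f f1 f2 : R -> R) (B : R) :
  (forall t, is_derive f t (f1 t)) -> (forall t, is_derive f1 t (f2 t)) ->
  (forall t, 0 <= t <= 1 -> Rabs (f2 t) <= B) ->
  Rabs (f 1 - f 0 - f1 0) <= B / 2.
Proof.
intros Hf Hf1 HB. apply Rabs_le. split.
- assert (H : - f 1 - - f 0 - - f1 0 <= B / 2).
  { apply (taylor_remainder_le (fun t => - f t) (fun t => - f1 t) (fun t => - f2 t)).
    + intro t. now apply (is_derive_opp f).
    + intro t. now apply (is_derive_opp f1).
    + intros t Ht. specialize (HB t Ht). apply Rabs_le_between in HB. lra. }
  lra.
- apply (taylor_remainder_le f f1 f2); auto.
  intros t Ht. specialize (HB t Ht). apply Rabs_le_between in HB. lra.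
Qed.

Lemma Rabs_cos_sin_comb_le (u v th : R) :
  Rabs (u * cos th + v * sin th) <= sqrt (u ^ 2 + v ^ 2).
Proof.
rewrite <- sqrt_Rsqr_abs. apply sqrt_le_1_alt. unfold Rsqr.
assert (Hcs := sin2_cos2 th). unfold Rsqr in Hcs.
assert (0 <= (u * sin th - v * cos th) ^ 2) by apply pow2_ge_0.
nra.
Qed.

Lemma cos_quadratic_taylor (K c b R0 R1 Q B : R) :
  0 <= K -> 0 <= c ->
  (forall t, 0 <= t <= 1 ->
     sqrt ((c * (R1 + 2 * Q * t) ^ 2) ^ 2 + (2 * Q) ^ 2) <= B) ->
  Rabs (K * cos (c * (R0 + R1 + Q) + b) - K * cos (c * R0 + b)
        - - K * sin (c * R0 + b) * c * R1) <= K * c * B / 2.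
Proof.
intros HK Hc HB.
set (th := fun t => c * (R0 + R1 * t + Q * (t * t)) + b).
assert (Taylor := taylor_remainder_abs_le
  (fun t => K * cos (th t))
  (fun t => - K * sin (th t) * c * (R1 + 2 * Q * t))
  (fun t => - (K * c) * (c * (R1 + 2 * Q * t) ^ 2 * cos (th t) + 2 * Q * sin (th t)))
  (K * c * B)).
replace (c * (R0 + R1 + Q) + b) with (th 1) by (unfold th; ring).
replace (c * R0 + b) with (th 0) by (unfold th; ring).
replace (- K * sin (th 0) * c * R1) with (- K * sin (th 0) * c * (R1 + 2 * Q * 0)) by ring.
apply Taylor.
- intro t. change R in t. unfold th. auto_derive; [exact I | ring].
- intro t. change R in t. unfold th. auto_derive; [exact I | ring].
- intros t Ht. rewrite Rabs_mult, Rabs_Ropp, (Rabs_pos_eq (K * c)) by nra.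
  apply Rmult_le_compat_l; [nra |].
  eapply Rle_trans; [apply Rabs_cos_sin_comb_le | now apply HB].
Qed.

Definition add3 (p q : R3) : R3 := (px p + px q, py p + py q, pz p + pz q).
Definition scal3 (a : R) (q : R3) : R3 := (a * px q, a * py q, a * pz q).

Definition grad_r_il (ri : R) (kap q : R3) : R3 :=
  add3 kap (scal3 (/ ri) (sub3 q (scal3 (dot3 q kap) kap))).

Ltac unfold_R3 :=
  unfold add3, scal3, sub3, norm2, dot3, px, py, pz; cbn [fst snd].

Lemma norm2_nonneg (q : R3) : 0 <= norm2 q.
Proof. destruct q as [[x y] z]. unfold_R3. nra. Qed.

Lemma dot3_scal3_l (a : R) (p q : R3) : dot3 (scal3 a p) q = a * dot3 p q.
Proof. unfold_R3. ring. Qed.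

Lemma add3_sub3 (p q : R3) : add3 q (scal3 1 (sub3 p q)) = p.
Proof. destruct p as [[x y] z]. unfold_R3. f_equal; [f_equal |]; ring. Qed.

Lemma convex3_segment (S : R3 -> Prop) (p q : R3) (t : R) :
  convex3 S -> S p -> S q -> 0 <= t <= 1 -> S (add3 q (scal3 t (sub3 p q))).
Proof.
intros HS Hp Hq Ht.
replace (add3 q (scal3 t (sub3 p q))) with
  (t * px p + (1 - t) * px q, t * py p + (1 - t) * py q, t * pz p + (1 - t) * pz q).
- now apply HS.
- unfold_R3. f_equal; [f_equal |]; ring.
Qed.

Lemma dot3_sqr_le (p q : R3) : dot3 p q ^ 2 <= norm2 p * norm2 q.
Proof.
destruct p as [[a1 a2] a3], q as [[b1 b2] b3]. unfold_R3.
(* Lagrange's identity *)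
assert (H1 := pow2_ge_0 (a1 * b2 - a2 * b1)).
assert (H2 := pow2_ge_0 (a1 * b3 - a3 * b1)).
assert (H3 := pow2_ge_0 (a2 * b3 - a3 * b2)).
nra.
Qed.

Lemma r_il_along_line (ri t : R) (kap q d : R3) : ri <> 0 ->
  r_il ri kap (add3 q (scal3 t d)) =
  r_il ri kap q + dot3 (grad_r_il ri kap q) d * t
  + (norm2 d - dot3 d kap ^ 2) / (2 * ri) * (t * t).
Proof. intro Hr. unfold r_il, grad_r_il. unfold_R3. field. exact Hr. Qed.

Lemma grad_r_il_along_line (ri t : R) (kap q d : R3) : ri <> 0 ->
  dot3 (grad_r_il ri kap (add3 q (scal3 t d))) d =
  dot3 (grad_r_il ri kap q) d + 2 * ((norm2 d - dot3 d kap ^ 2) / (2 * ri)) * t.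
Proof. intro Hr. unfold grad_r_il. unfold_R3. field. exact Hr. Qed.

Lemma norm2_grad_r_il (ri : R) (kap q : R3) : ri <> 0 -> norm2 kap = 1 ->
  norm2 (grad_r_il ri kap q) = 1 + (norm2 q - dot3 q kap ^ 2) / ri ^ 2.
Proof.
intros Hr Hk. destruct kap as [[k1 k2] k3], q as [[x y] z]. revert Hk.
unfold grad_r_il. unfold_R3. intro Hk.
(* the two sides differ by a multiple of [norm2 kap - 1] *)
transitivity (1 + (x * x + y * y + z * z - (x * k1 + y * k2 + z * k3) ^ 2) / ri ^ 2
  + (k1 * k1 + k2 * k2 + k3 * k3 - 1) * (1 - (x * k1 + y * k2 + z * k3) / ri) ^ 2).
- field. exact Hr.
- rewrite Hk. ring.
Qed.

Lemma grad3_comp_r_il (G G' : R -> R) (ri : R) (kap q : R3) :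
  (forall x, is_derive G x (G' x)) -> ri <> 0 ->
  grad3 (fun p => G (r_il ri kap p)) q = scal3 (G' (r_il ri kap q)) (grad_r_il ri kap q).
Proof.
intros HG Hr. destruct q as [[x y] z], kap as [[k1 k2] k3].
unfold grad3, grad_r_il. unfold_R3.
f_equal; [f_equal |]; apply is_derive_unique; rewrite Rmult_comm;
  (apply (is_derive_comp G); [apply HG |]);
  unfold r_il; unfold_R3; auto_derive; (lra || (field; exact Hr)).
Qed.

Lemma sqrt_curvature_le (c ri A N w v : R) :
  0 <= c -> 0 < ri -> 0 <= N -> w ^ 2 <= A * N -> 0 <= v * ri <= N ->
  sqrt ((c * w ^ 2) ^ 2 + v ^ 2) <= N * sqrt (2 / ri ^ 2 + c ^ 2 * A ^ 2).
Proof.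
intros Hc Hr HN Hw Hv.
rewrite <- (sqrt_square N) at 1 by exact HN.
rewrite <- sqrt_mult_alt by nra.
apply sqrt_le_1_alt.
assert (Hcw : (c * w ^ 2) ^ 2 <= (c * (A * N)) ^ 2)
  by (assert (0 <= w ^ 2) by apply pow2_ge_0; apply pow_incr; split; nra).
assert (Hri2 : 0 < ri ^ 2) by (apply pow_lt; lra).
assert (Hv2 : v ^ 2 <= N * N * (2 / ri ^ 2)).
{ apply (Rmult_le_reg_r (ri ^ 2)); [exact Hri2 |].
  replace (N * N * (2 / ri ^ 2) * ri ^ 2) with (2 * (N * N)) by (field; lra).
  nra. }
lra.
Qed.

Lemma cos_r_il_taylor (K c a b ri Cmax : R) (kap q q0 : R3) :
  0 <= K -> 0 <= c -> 0 < ri -> norm2 kap = 1 ->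
  (forall t, 0 <= t <= 1 -> norm2 (add3 q0 (scal3 t (sub3 q q0))) <= Cmax) ->
  Rabs (K * cos (c * (r_il ri kap q - a) + b) - K * cos (c * (r_il ri kap q0 - a) + b)
        - - K * sin (c * (r_il ri kap q0 - a) + b) * c
            * dot3 (grad_r_il ri kap q0) (sub3 q q0))
  <= K * c * sqrt (2 / ri ^ 2 + c ^ 2 * (1 + Cmax / ri ^ 2) ^ 2) / 2 * norm2 (sub3 q q0).
Proof.
intros HK Hc Hr Hk Hseg.
assert (Hr0 : ri <> 0) by lra.
set (d := sub3 q q0) in *.
set (N := norm2 d).
set (A := 1 + Cmax / ri ^ 2).
set (Q := (N - dot3 d kap ^ 2) / (2 * ri)).
set (R1 := dot3 (grad_r_il ri kap q0) d).
assert (HN : 0 <= N) by apply norm2_nonneg.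
assert (Hdk : dot3 d kap ^ 2 <= N).
{ assert (H := dot3_sqr_le d kap). rewrite Hk in H. fold N in H. lra. }
assert (Er : r_il ri kap q = r_il ri kap q0 + R1 + Q).
{ rewrite <- (add3_sub3 q q0) at 1. fold d.
  rewrite r_il_along_line by exact Hr0. fold R1 N Q. ring. }
rewrite Er.
replace (c * (r_il ri kap q0 + R1 + Q - a) + b)
  with (c * ((r_il ri kap q0 - a) + R1 + Q) + b) by ring.
replace (K * c * sqrt (2 / ri ^ 2 + c ^ 2 * A ^ 2) / 2 * N)
  with (K * c * (N * sqrt (2 / ri ^ 2 + c ^ 2 * A ^ 2)) / 2) by field.
apply cos_quadratic_taylor; [exact HK | exact Hc |].
intros t Ht.
apply sqrt_curvature_le; [exact Hc | exact Hr | exact HN | |].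
- unfold R1, Q, N. rewrite <- grad_r_il_along_line by exact Hr0.
  eapply Rle_trans; [apply dot3_sqr_le |]. fold N.
  apply Rmult_le_compat_r; [exact HN |].
  rewrite norm2_grad_r_il by assumption. unfold A.
  apply Rplus_le_compat_l, Rmult_le_compat_r.
  + apply Rlt_le, Rinv_0_lt_compat, pow_lt; lra.
  + assert (H := Hseg t Ht). assert (H0 := pow2_ge_0 (dot3 (add3 q0 (scal3 t d)) kap)). lra.
- replace (2 * Q * ri) with (N - dot3 d kap ^ 2) by (unfold Q; field; exact Hr0).
  assert (H := pow2_ge_0 (dot3 d kap)). lra.
Qed.

Lemma sum_f_R0_remainder_le (a b e D : nat -> R) (n : nat) :
  (forall j, (j <= n)%nat -> Rabs (a j - b j - e j) <= D j) ->
  Rabs (sum_f_R0 a n - sum_f_R0 b n - sum_f_R0 e n) <= sum_f_R0 D n.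
Proof.
intro H. rewrite <- !minus_sum.
eapply Rle_trans; [apply Rsum_abs | now apply sum_Rle].
Qed.

Lemma is_derive_sum_f_R0 (F : nat -> R -> R) (dF : nat -> R) (x : R) (n : nat) :
  (forall j, (j <= n)%nat -> is_derive (F j) x (dF j)) ->
  is_derive (fun t => sum_f_R0 (fun j => F j t) n) x (sum_f_R0 dF n).
Proof.
intro HF. rewrite <- sum_n_Reals.
apply (is_derive_ext (fun t => sum_n (fun j => F j t) n)).
- intro t. apply sum_n_Reals.
- exact (@is_derive_sum_n R_AbsRing R_NormedModule F n x dF HF).
Qed.

Definition g_profile (lam : R) (L l : nat) (alpha : C) (V : nat -> C) (rl' : nat -> R)
    (rho : R) : R :=
  sum_f_R0 (fun j => if Nat.eqb j l then 0 else
     2 * Cmod alpha ^ 2 * Cmod (V j) * cos (2 * PI / lam * (rho - rl' j) + Carg (V j)))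
   (L - 1).

Definition g_profile_deriv (lam : R) (L l : nat) (alpha : C) (V : nat -> C)
    (rl' : nat -> R) (rho : R) : R :=
  sum_f_R0 (fun j => if Nat.eqb j l then 0 else
     - (2 * Cmod alpha ^ 2 * Cmod (V j)) * sin (2 * PI / lam * (rho - rl' j) + Carg (V j))
     * (2 * PI / lam))
   (L - 1).

Lemma g_kil_profile (lam : R) (L l : nat) (alpha : C) (ri : R) (kap : R3)
    (V : nat -> C) (rl' : nat -> R) :
  g_kil lam L l alpha ri kap V rl' = fun q => g_profile lam L l alpha V rl' (r_il ri kap q).
Proof. reflexivity. Qed.

Lemma is_derive_g_profile (lam : R) (L l : nat) (alpha : C) (V : nat -> C)
    (rl' : nat -> R) (rho : R) :
  is_derive (g_profile lam L l alpha V rl') rho (g_profile_deriv lam L l alpha V rl' rho).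
Proof.
unfold g_profile, g_profile_deriv.
apply is_derive_sum_f_R0. intros j _.
destruct (Nat.eqb j l).
- auto_derive; [exact I | ring].
- auto_derive; [exact I | unfold Rminus; ring].
Qed.

Lemma g_profile_taylor (lam : R) (L l : nat) (alpha : C) (ri : R) (kap : R3)
    (V : nat -> C) (rl' : nat -> R) (Cmax : R) (q q0 : R3) :
  0 < lam -> 0 < ri -> norm2 kap = 1 ->
  (forall t, 0 <= t <= 1 -> norm2 (add3 q0 (scal3 t (sub3 q q0))) <= Cmax) ->
  Rabs (g_profile lam L l alpha V rl' (r_il ri kap q)
        - g_profile lam L l alpha V rl' (r_il ri kap q0)
        - g_profile_deriv lam L l alpha V rl' (r_il ri kap q0)
          * dot3 (grad_r_il ri kap q0) (sub3 q q0))
  <= delta_kil lam L l alpha ri V Cmax / 2 * norm2 (sub3 q q0).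
Proof.
intros Hlam Hr Hk Hseg.
unfold delta_kil, g_profile, g_profile_deriv.
set (c := 2 * PI / lam). set (N := norm2 (sub3 q q0)).
set (M := sqrt (2 / ri ^ 2 + c ^ 2 * (1 + Cmax / ri ^ 2) ^ 2)).
assert (Hc : 0 <= c)
  by (apply Rlt_le, Rdiv_lt_0_compat; [assert (H := PI_RGT_0) |]; lra).
assert (E : forall S, c * S / 2 * N = c / 2 * N * S) by (intro; field).
rewrite E, (Rmult_comm (sum_f_R0 _ _) (dot3 _ _)), !scal_sum.
apply sum_f_R0_remainder_le. intros j _.
destruct (Nat.eqb j l).
- replace (0 - 0 - 0 * dot3 (grad_r_il ri kap q0) (sub3 q q0)) with 0 by ring.
  rewrite Rabs_R0. lra.
- replace (2 * Cmod alpha ^ 2 * Cmod (V j) * M * (c / 2 * N))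
    with (2 * Cmod alpha ^ 2 * Cmod (V j) * c * M / 2 * N) by field.
  apply cos_r_il_taylor; try assumption.
  assert (H1 := Cmod_ge_0 alpha). assert (H2 := Cmod_ge_0 (V j)).
  assert (H3 := pow2_ge_0 (Cmod alpha)). nra.
Qed.

Theorem lemma1 (lam : R) (L l : nat) (alpha : C) (ri : R) (kap : R3)
    (V : nat -> C) (rl' : nat -> R) (S : R3 -> Prop) (Cmax : R) :
  0 < lam -> (2 <= L)%nat -> (l < L)%nat -> 0 < ri -> norm2 kap = 1 ->
  convex3 S ->
  is_lub (fun c => exists q, S q /\ c = norm2 q) Cmax ->
  forall q qj : R3, S q -> S qj ->
    g_kil lam L l alpha ri kap V rl' q >=
      g_kil lam L l alpha ri kap V rl' qj
      + dot3 (grad3 (g_kil lam L l alpha ri kap V rl') qj) (sub3 q qj)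
      - delta_kil lam L l alpha ri V Cmax / 2 * norm2 (sub3 q qj)
    /\
    g_kil lam L l alpha ri kap V rl' q <=
      g_kil lam L l alpha ri kap V rl' qj
      + dot3 (grad3 (g_kil lam L l alpha ri kap V rl') qj) (sub3 q qj)
      + delta_kil lam L l alpha ri V Cmax / 2 * norm2 (sub3 q qj).
Proof.
intros Hlam _ _ Hr Hk HS [Hub _] q qj Hq Hqj.
assert (Hseg : forall t, 0 <= t <= 1 -> norm2 (add3 qj (scal3 t (sub3 q qj))) <= Cmax).
{ intros t Ht. apply Hub. exists (add3 qj (scal3 t (sub3 q qj))).
  split; [now apply convex3_segment | reflexivity]. }
rewrite g_kil_profile, (grad3_comp_r_il _ (g_profile_deriv lam L l alpha V rl')),
  dot3_scal3_l.
- assert (Taylor := g_profile_taylor lam L l alpha ri kap V rl' Cmax q qj Hlam Hr Hk Hseg).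
  apply Rabs_le_between in Taylor. lra.
- apply is_derive_g_profile.
- lra.
Qed.
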